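(* Let $\Omega:S^1\to\mathbb{R}$ be of class $C^{m-1}(S^1)$ for some integer $m\ge2$, such that $\Omega'(\theta)+1>0$ for all $\theta$. Then there exist constants $\epsilon_0>0$ and $\mu>0$ such that whenever $0<\epsilon<\epsilon_0$, \[ \left|e^{-iE_m\Omega(r,\theta)}\right|\le r^{1-\mu}\quad\text{for all }\theta\text{ and }1\le r\le2^\epsilon, \qquad \left|e^{iE_m\Omega(r,\theta)}\right|\le r^{\mu-1}\quad\text{for all }\theta\text{ and }2^{-\epsilon}\le r\le1. \]
   Context: For a $C^{m-1}$ function $f$ on the circle, $E_mf(r,\theta)=\sum_{p=0}^{m-1}\frac{f^{(p)}(\theta)}{p!}(-i\log r)^p$ for $r>0$, $\theta\in S^1$. *)

From Stdlib Require Import Reals Arith.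
From Coquelicot Require Import Coquelicot.
Open Scope R_scope.

Definition Cexp (z : C) : C :=
  (exp (Re z) * cos (Im z), exp (Re z) * sin (Im z)).

(* Functions on the circle S^1 = R / 2piZ are 2pi-periodic functions on R. *)
Definition circle_fun (f : R -> R) : Prop := forall x, f (x + 2 * PI) = f x.

Definition Ck (k : nat) (f : R -> R) : Prop :=
  (forall n, (n < k)%nat -> forall x, ex_derive (Derive_n f n) x) /\
  (forall n, (n <= k)%nat -> forall x, continuous (Derive_n f n) x).

Definition Em (m : nat) (f : R -> R) (r theta : R) : C :=
  sum_n (fun p => Cmult (RtoC (Derive_n f p theta / INR (Factorial.fact p)))
                        (Cpow (Cmult (Copp Ci) (RtoC (ln r))) p)) (m - 1).

From Stdlib Require Import Reals Lra Lia ZArith.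
From Coquelicot Require Import Coquelicot.
Open Scope R_scope.

(* Write L = ln r.  In E_m Omega (r, theta) the p = 0 term is real and the p = 1 term
   is -i Omega'(theta) L, while for |L| <= 1 every term with p >= 2 is O(L^2) uniformly
   in theta, because the derivatives of the periodic C^(m-1) function Omega are bounded.
   Hence |e^(-i E_m Omega)| = e^(Im E_m Omega) = e^(-Omega'(theta) L + O(L^2)).  With
   delta = min (Omega' + 1) > 0 (attained by periodicity) and mu = delta / 2, the
   quadratic error is absorbed into delta L / 2 once |L| is small, which gives both
   bounds. *)

Section PeriodicFunction.

Variables (T : R) (g : R -> R).
Hypothesis T_gt0 : 0 < T.
Hypothesis g_periodic : forall x, g (x + T) = g x.

Lemma periodic_IZR (z : Z) (x : R) : g (x + T * IZR z) = g x.
Proof.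
  revert x; induction z as [|z IH|z IH] using Z.peano_ind; intros x.
  - now rewrite Rmult_0_r, Rplus_0_r.
  - rewrite succ_IZR, <- (IH x), <- (g_periodic (x + T * IZR z)). f_equal. ring.
  - rewrite <- Z.sub_1_r, minus_IZR, <- (IH x), <- (g_periodic (x + T * (IZR z - 1))).
    f_equal. ring.
Qed.

Lemma periodic_reduce (x : R) : exists y, 0 <= y <= T /\ g x = g y.
Proof.
  destruct (base_Int_part (x / T)) as [Hlo Hhi].
  set (k := Int_part (x / T)) in *.
  exists (x - T * IZR k). split.
  - replace (x - T * IZR k) with (T * (x / T - IZR k)) by (field; lra). nra.
  - rewrite <- (periodic_IZR k (x - T * IZR k)). f_equal. ring.
Qed.

Hypothesis g_continuous : forall x, continuous g x.

Let g_continuity_pt (x : R) : continuity_pt g x.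
Proof. apply continuity_pt_filterlim, g_continuous. Qed.

Lemma periodic_attains_min : exists x0, forall x, g x0 <= g x.
Proof.
  destruct (continuity_ab_min g 0 T) as [x0 [Hmin _]]; [lra | auto |].
  exists x0. intros x. destruct (periodic_reduce x) as [y [Hy ->]]. auto.
Qed.

Lemma periodic_attains_max : exists x1, forall x, g x <= g x1.
Proof.
  destruct (continuity_ab_maj g 0 T) as [x1 [Hmax _]]; [lra | auto |].
  exists x1. intros x. destruct (periodic_reduce x) as [y [Hy ->]]. auto.
Qed.

Lemma periodic_bounded : exists A, forall x, Rabs (g x) <= A.
Proof.
  destruct periodic_attains_min as [x0 Hx0], periodic_attains_max as [x1 Hx1].
  exists (Rmax (g x1) (- g x0)). intros x. apply Rabs_le_between_Rmax. auto.
Qed.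

End PeriodicFunction.

Lemma Derive_n_periodic (T : R) (f : R -> R) :
  (forall x, f (x + T) = f x) -> forall n x, Derive_n f n (x + T) = Derive_n f n x.
Proof.
  intros Hf n x. rewrite <- Derive_n_comp_trans. apply Derive_n_ext. auto.
Qed.

Lemma uniform_bound_le (F : nat -> R -> R) (n : nat) :
  (forall p, (p <= n)%nat -> exists A, forall x, Rabs (F p x) <= A) ->
  exists A, forall p x, (p <= n)%nat -> Rabs (F p x) <= A.
Proof.
  induction n as [|n IH]; intros HF.
  - destruct (HF 0%nat (le_n 0)) as [A HA].
    exists A. intros p x Hp. replace p with 0%nat by lia. auto.
  - destruct IH as [A1 HA1]; [auto|].
    destruct (HF (S n) (le_n _)) as [A2 HA2].
    exists (Rmax A1 A2). intros p x Hp.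
    destruct (Nat.eq_dec p (S n)) as [->|Hne].
    + eapply Rle_trans; [apply HA2 | apply Rmax_r].
    + eapply Rle_trans; [apply HA1; lia | apply Rmax_l].
Qed.

Lemma Ck_periodic_Derive_n_bounded (k : nat) (T : R) (f : R -> R) :
  0 < T -> (forall x, f (x + T) = f x) -> Ck k f ->
  exists A, forall p x, (p <= k)%nat -> Rabs (Derive_n f p x) <= A.
Proof.
  intros HT Hf [_ Hcont]. apply uniform_bound_le. intros p Hp.
  apply (periodic_bounded T); auto. now apply Derive_n_periodic.
Qed.

Lemma Cmod_Cexp (z : C) : Cmod (Cexp z) = exp (Re z).
Proof.
  unfold Cexp, Cmod; cbn [fst snd].
  replace ((exp (Re z) * cos (Im z)) ^ 2 + (exp (Re z) * sin (Im z)) ^ 2)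
    with (exp (Re z) ^ 2 * ((sin (Im z))² + (cos (Im z))²)) by (unfold Rsqr; ring).
  rewrite sin2_cos2, Rmult_1_r. apply sqrt_pow2. left; apply exp_pos.
Qed.

Lemma Re_mul_negI (z : C) : Re (Cmult (Copp Ci) z) = Im z.
Proof. destruct z; unfold Cmult, Copp, Ci, Re, Im; simpl; ring. Qed.

Lemma Re_mul_I (z : C) : Re (Cmult Ci z) = - Im z.
Proof. destruct z; unfold Cmult, Ci, Re, Im; simpl; ring. Qed.

Lemma exp_le (x y : R) : x <= y -> exp x <= exp y.
Proof. intros [Hlt | ->]; [left; now apply exp_increasing | apply Rle_refl]. Qed.

Definition negI_poly (a : nat -> R) (n : nat) (t : R) : C :=
  sum_n (fun p => Cmult (RtoC (a p)) (Cpow (Cmult (Copp Ci) (RtoC t)) p)) n.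

Lemma Rabs_Im_negI_monomial_le (c t : R) (p : nat) : Rabs t <= 1 ->
  Rabs (Im (Cmult (RtoC c) (Cpow (Cmult (Copp Ci) (RtoC t)) (S (S p))))) <= Rabs c * t ^ 2.
Proof.
  intros Ht.
  eapply Rle_trans; [eapply Rle_trans; [apply Rmax_r | apply Rmax_Cmod] |].
  rewrite Cmod_mult, Cmod_pow, Cmod_mult, Cmod_opp, Cmod_Ci, !Cmod_R, Rmult_1_l.
  replace (Rabs t ^ S (S p)) with (t ^ 2 * Rabs t ^ p) by (rewrite <- pow2_abs; simpl; ring).
  assert (Rabs t ^ p <= 1) by (rewrite <- (pow1 p); apply pow_incr; split; [apply Rabs_pos | exact Ht]).
  apply Rmult_le_compat_l; [apply Rabs_pos |].
  rewrite <- (Rmult_1_r (t ^ 2)) at 2. apply Rmult_le_compat_l; [apply pow2_ge_0 | assumption].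
Qed.

Lemma Im_negI_poly_linear_approx (a : nat -> R) (A t : R) (n : nat) :
  Rabs t <= 1 -> (forall p, (2 <= p <= S n)%nat -> Rabs (a p) <= A) ->
  Rabs (Im (negI_poly a (S n) t) + a 1%nat * t) <= INR n * A * t ^ 2.
Proof.
  intros Ht Ha. induction n as [|n IH].
  - unfold negI_poly. rewrite sum_Sn, sum_O. simpl.
    replace (_ + _) with 0 by ring. rewrite Rabs_R0. lra.
  - unfold negI_poly in *. rewrite sum_Sn.
    specialize (IH (fun p Hp => Ha p ltac:(lia))).
    pose proof (Rabs_Im_negI_monomial_le (a (S (S n))) t n Ht) as Hterm.
    assert (Hcoef : Rabs (a (S (S n))) * t ^ 2 <= A * t ^ 2)
      by (apply Rmult_le_compat_r; [apply pow2_ge_0 | apply Ha; lia]).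
    match goal with |- Rabs (Im (plus ?s ?u) + ?l) <= _ =>
      replace (Im (plus s u) + l) with ((Im s + l) + Im u) by (simpl; ring) end.
    eapply Rle_trans; [apply Rabs_triang |]. rewrite S_INR. lra.
Qed.

Lemma Rabs_div_fact_le (x : R) (p : nat) : Rabs (x / INR (fact p)) <= Rabs x.
Proof.
  assert (Hfact : 1 <= INR (fact p)) by (apply (le_INR 1); pose proof (lt_O_fact p); lia).
  unfold Rdiv. rewrite Rabs_mult, Rabs_inv, (Rabs_pos_eq (INR _)) by lra.
  rewrite <- (Rmult_1_r (Rabs x)) at 2. apply Rmult_le_compat_l; [apply Rabs_pos |].
  rewrite <- Rinv_1. apply Rinv_le_contravar; lra.
Qed.

Lemma Im_Em_linear_approx (m : nat) (f : R -> R) (A r theta : R) :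
  (2 <= m)%nat -> Rabs (ln r) <= 1 ->
  (forall p, (p <= m - 1)%nat -> Rabs (Derive_n f p theta) <= A) ->
  Rabs (Im (Em m f r theta) + Derive f theta * ln r) <= INR (m - 2) * A * ln r ^ 2.
Proof.
  intros Hm Hr HA. destruct m as [|[|k]]; [lia | lia |].
  replace (S (S k) - 2)%nat with k by lia.
  change (Em (S (S k)) f r theta)
    with (negI_poly (fun p => Derive_n f p theta / INR (fact p)) (S k) (ln r)).
  replace (Derive f theta) with (Derive_n f 1 theta / INR (fact 1)) by (change (INR (fact 1)) with 1; unfold Rdiv; rewrite Rinv_1, Rmult_1_r; reflexivity).
  apply Im_negI_poly_linear_approx; [exact Hr |].
  intros p Hp. eapply Rle_trans; [apply Rabs_div_fact_le | apply HA; lia].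
Qed.

Lemma linear_approx_exponent_bounds (I d L K delta : R) :
  delta <= d + 1 -> Rabs (I + d * L) <= K * L ^ 2 -> K * Rabs L <= delta / 2 ->
  (0 <= L -> I <= (1 - delta / 2) * L) /\ (L <= 0 -> - I <= (delta / 2 - 1) * L).
Proof.
  intros Hd Happrox HKL. apply Rabs_le_between in Happrox.
  split; intros HL.
  - rewrite Rabs_pos_eq in HKL by exact HL.
    assert (0 <= (delta / 2 - K * L) * L) by (apply Rmult_le_pos; lra).
    assert (0 <= (d + 1 - delta) * L) by (apply Rmult_le_pos; lra).
    nra.
  - rewrite Rabs_left1 in HKL by exact HL.
    assert (0 <= (delta / 2 + K * L) * - L) by (apply Rmult_le_pos; lra).
    assert (0 <= (d + 1 - delta) * - L) by (apply Rmult_le_pos; lra).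
    nra.
Qed.

Lemma ln_2_le_1 : ln 2 <= 1.
Proof.
  rewrite <- (ln_exp 1). apply ln_le; [lra |].
  pose proof (exp_ineq1_le 1). lra.
Qed.

Lemma ln_bounds_above_one (eps r : R) :
  0 <= eps -> 1 <= r <= Rpower 2 eps -> 0 <= ln r <= eps.
Proof.
  intros Heps Hr. split.
  - rewrite <- ln_1. apply ln_le; lra.
  - eapply Rle_trans; [apply ln_le; [lra | apply Hr] |].
    rewrite ln_Rpower. pose proof ln_2_le_1. pose proof ln_lt_2. nra.
Qed.

Lemma ln_bounds_below_one (eps r : R) :
  0 <= eps -> Rpower 2 (- eps) <= r <= 1 -> - eps <= ln r <= 0.
Proof.
  intros Heps Hr. assert (Hpow : 0 < Rpower 2 (- eps)) by apply exp_pos. split.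
  - eapply Rle_trans; [| apply ln_le; [exact Hpow | apply Hr]].
    rewrite ln_Rpower. pose proof ln_2_le_1. pose proof ln_lt_2. nra.
  - rewrite <- ln_1. apply ln_le; lra.
Qed.

Lemma exists_step_le (K c : R) : 0 <= K -> 0 < c -> exists e, 0 < e <= 1 /\ K * e <= c.
Proof.
  intros HK Hc. exists (Rmin 1 (c / (K + 1))). split.
  - split; [apply Rmin_pos; [lra | apply Rdiv_lt_0_compat; lra] | apply Rmin_l].
  - assert (Hmin : Rmin 1 (c / (K + 1)) <= c / (K + 1)) by apply Rmin_r.
    assert (0 < Rmin 1 (c / (K + 1))) by (apply Rmin_pos; [lra | apply Rdiv_lt_0_compat; lra]).
    apply Rle_trans with ((K + 1) * (c / (K + 1))); [nra | right; field; lra].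
Qed.

Theorem lemma4p8 (m : nat) (Omega : R -> R) :
  (2 <= m)%nat ->
  circle_fun Omega ->
  Ck (m - 1) Omega ->
  (forall theta, Derive Omega theta + 1 > 0) ->
  exists eps0 mu : R, eps0 > 0 /\ mu > 0 /\
    forall eps, 0 < eps < eps0 ->
      (forall theta r, 1 <= r <= Rpower 2 eps ->
         Cmod (Cexp (Cmult (Copp Ci) (Em m Omega r theta))) <= Rpower r (1 - mu)) /\
      (forall theta r, Rpower 2 (- eps) <= r <= 1 ->
         Cmod (Cexp (Cmult Ci (Em m Omega r theta))) <= Rpower r (mu - 1)).
Proof.
  intros Hm Hper HCk Hslope.
  assert (HT : 0 < 2 * PI) by (pose proof PI_RGT_0; lra).
  destruct (Ck_periodic_Derive_n_bounded _ _ _ HT Hper HCk) as [A HA].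
  assert (HA0 : 0 <= A) by (eapply Rle_trans; [apply Rabs_pos | apply (HA 0%nat 0); lia]).
  destruct (periodic_attains_min (2 * PI) (Derive Omega) HT (Derive_n_periodic _ _ Hper 1))
    as [x0 Hx0]; [apply (proj2 HCk 1%nat); lia |].
  set (delta := Derive Omega x0 + 1).
  assert (Hdelta : 0 < delta) by apply Hslope.
  set (K := INR (m - 2) * A).
  destruct (exists_step_le K (delta / 2)) as [eps0 [Heps0 HKeps0]];
    [apply Rmult_le_pos; [apply pos_INR | exact HA0] | lra |].
  exists eps0, (delta / 2). split; [lra |]. split; [lra |].
  intros eps Heps.
  assert (Hexponent : forall theta r, Rabs (ln r) <= eps ->
    (0 <= ln r -> Im (Em m Omega r theta) <= (1 - delta / 2) * ln r) /\
    (ln r <= 0 -> - Im (Em m Omega r theta) <= (delta / 2 - 1) * ln r)).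
  { intros theta r Hr. apply (linear_approx_exponent_bounds _ (Derive Omega theta) _ K).
    - specialize (Hx0 theta). unfold delta. lra.
    - apply Im_Em_linear_approx; [exact Hm | lra | intros p Hp; now apply HA].
    - pose proof (Rabs_pos (ln r)). nra. }
  split; intros theta r Hr; unfold Rpower; rewrite Cmod_Cexp; apply exp_le.
  - rewrite Re_mul_negI. apply ln_bounds_above_one in Hr; [| lra].
    apply Hexponent; [rewrite Rabs_pos_eq |]; lra.
  - rewrite Re_mul_I. apply ln_bounds_below_one in Hr; [| lra].
    apply Hexponent; [rewrite Rabs_left1 |]; lra.
Qed.
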